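(* In the two-door cascading memoryless semi-fractional setting, let $x\in[0,1]$, let $w$ be a non-empty finite sequence of knocks that is $x$-invariant, and let $\pi$ be a semi-fractional sequence. If $\mathbb{E}_x[w\pi]\le\mathbb{E}_x[\pi]$, then $\mathbb{E}_x[w^\infty]\le\mathbb{E}_x[w\pi]$.
   Context: Two cascading memoryless doors with durations: parameters $p_1,p_2\in(0,1)$, $q_1=1-p_1$, $q_2=1-p_2$, and $c>0$. Sequences consist of knocks $1^t$ ($t\ge0$ real) and $2$; a semi-fractional sequence is an infinite such sequence. A 1-knock $1^t$ takes $t$ time units and, if door 1 is closed, opens it with probability $1-q_1^t$, independently of everything else. A 2-knock takes $c$ time units and opens door 2 with probability $p_2$ (independently) if door 1 is open at that time, and with probability $0$ otherwise. There is no feedback; the running time is the time at which both doors are open. For $x\in[0,1]$, $\mathbb{E}_x[\pi]$ is the expected running time of $\pi$ when started with door 2 closed and door 1 closed with probability $x$. For a finite sequence $w$ the state map $\delta$ is defined by $\delta(x,1^t)=q_1^tx$, $\delta(x,2)=x/(q_2+p_2x)$, $\delta(x,aw)=\delta(\delta(x,a),w)$ for a knock $a$. A non-empty finite sequence $w$ is $x$-invariant if $\delta(x,w)=x$. $w\pi$ denotes concatenation and $w^\infty=www\cdots$. *)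

From HB Require Import structures.
From mathcomp Require Import all_boot all_order all_algebra.
From mathcomp Require Import all_classical all_reals all_analysis.
Set Implicit Arguments. Unset Strict Implicit. Unset Printing Implicit Defensive.
Import Order.TTheory GRing.Theory Num.Theory.
Local Open Scope ring_scope.

(* A knock: a 1-knock 1^t (t a real duration) or a 2-knock. *)
Inductive knock (R : Type) := Knock1 of R | Knock2.
Arguments Knock2 {R}.

Section Doors.
Variable R : realType.
Variables (p1 p2 c : R).
Let q1 := 1 - p1.
Let q2 := 1 - p2.

Definition knock_ok (k : knock R) : bool :=
  if k is Knock1 t then 0 <= t else true.

Definition dur (k : knock R) : R := if k is Knock1 t then t else c.

(* Forward (unnormalised) evolution of the joint law of (door 1, "door 2 still
   closed").  State (a, b):
     a = P(door 1 closed and door 2 still closed),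
     b = P(door 1 open   and door 2 still closed).
   A 1-knock 1^t opens a closed door 1 with prob. 1 - q1^t;
   a 2-knock opens door 2 with prob. p2 iff door 1 is open. *)
Definition step (st : R * R) (k : knock R) : R * R :=
  let: (a, b) := st in
  match k with
  | Knock1 t => (a * q1 `^ t, b + a * (1 - q1 `^ t))
  | Knock2 => (a, b * q2)
  end.

(* probability that not both doors are open after the first n knocks of pi,
   starting with door 1 closed with probability x and door 2 closed *)
Definition surv (x : R) (pi : nat -> knock R) (n : nat) : R :=
  let: (a, b) := foldl step (x, 1 - x) [seq pi i | i <- iota 0 n] in a + b.

(* Expected running time: E[T] = sum_i dur(pi_i) * P(T > start of knock i),
   an extended real (possibly +oo). *)
Definition expect (x : R) (pi : nat -> knock R) : \bar R :=
  (\sum_(i <oo) ((dur (pi i) * surv x pi i)%:E))%E.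

Definition delta1 (x : R) (k : knock R) : R :=
  match k with
  | Knock1 t => q1 `^ t * x
  | Knock2 => x / (q2 + p2 * x)
  end.
Definition delta (x : R) (w : seq (knock R)) : R := foldl delta1 x w.

End Doors.

Definition kcat (R : Type) (w : seq (knock R)) (pi : nat -> knock R) : nat -> knock R :=
  fun n => if (n < size w)%N then nth Knock2 w n else pi (n - size w)%N.
Definition kinf (R : Type) (w : seq (knock R)) : nat -> knock R :=
  fun n => nth Knock2 w (n %% size w).

From HB Require Import structures.
From mathcomp Require Import all_boot all_order all_algebra.
From mathcomp Require Import all_classical all_reals all_analysis.
From mathcomp Require Import ring lra.
Import Order.TTheory GRing.Theory Num.Theory.
Local Open Scope ring_scope.

(** The state after any prefix, started from (y, 1 - y), is proportional to
  (delta y l, 1 - delta y l), the factor being the survival probability; so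
  survival is multiplicative along concatenation, and after an x-invariant w
  the process restarts from x.  Writing S for the survival probability after w
  and A for the expected time spent in w, this gives E_x[w pi] = A + S E_x[pi],
  and the partial sums T_N of E_x[w^oo] over N periods satisfy
  T_(N+1) = A + S T_N.  By induction T_N <= E_x[w pi], since
  A + S E_x[w pi] <= A + S E_x[pi] = E_x[w pi]. *)

Section Survival.
Variables (R : realType) (p1 p2 : R).
Hypothesis p2_ge0 : 0 <= p2.
Hypothesis p2_lt1 : p2 < 1.
Implicit Types (x y s : R) (l w r : seq (knock R)).

Local Notation step := (step p1 p2).
Local Notation delta := (delta p1 p2).
Local Notation surv := (surv p1 p2).

Definition surv_seq (x : R) (l : seq (knock R)) : R :=
  let: (a, b) := foldl step (x, 1 - x) l in a + b.

Lemma surv_mkseq x (pi : nat -> knock R) n : surv x pi n = surv_seq x (mkseq pi n).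
Proof. by []. Qed.

Lemma delta2_denom_gt0 y : 0 <= y -> 0 < 1 - p2 + p2 * y.
Proof. by move=> y0; have := mulr_ge0 p2_ge0 y0; have := p2_lt1; lra. Qed.

Lemma delta_ge0 y l : 0 <= y -> 0 <= delta y l.
Proof.
elim: l y => [|[t|] l IH] y y0 //=; apply: IH; first exact: mulr_ge0 (powR_ge0 _ _) y0.
exact: divr_ge0 y0 (ltW (delta2_denom_gt0 y y0)).
Qed.

Lemma foldl_stepZ (l : seq (knock R)) (s a b : R) :
  foldl step (s * a, s * b) l =
  (s * (foldl step (a, b) l).1, s * (foldl step (a, b) l).2).
Proof.
elim: l a b => [|[t|] l IH] a b //=; rewrite -IH; congr foldl; congr pair; ring.
Qed.

Lemma foldl_step_delta (l : seq (knock R)) (s y : R) : 0 <= s -> 0 <= y ->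
  exists2 m, 0 <= m &
    foldl step (s * y, s * (1 - y)) l = (m * delta y l, m * (1 - delta y l)).
Proof.
elim: l s y => [|[t|] l IH] s y s0 y0 /=; first by exists s.
- have [|m m0 foldE] := IH s ((1 - p1) `^ t * y) s0.
    exact: mulr_ge0 (powR_ge0 _ _) y0.
  by exists m; rewrite // -foldE; congr foldl; congr pair; ring.
- have q_gt0 := delta2_denom_gt0 y y0.
  have [||m m0 foldE] := IH (s * (1 - p2 + p2 * y)) (y / (1 - p2 + p2 * y)).
  + exact: mulr_ge0 s0 (ltW q_gt0).
  + exact: divr_ge0 y0 (ltW q_gt0).
  by exists m; rewrite // -foldE; congr foldl; congr pair; field; rewrite gt_eqF.
Qed.

Lemma surv_seq_ge0 y l : 0 <= y -> 0 <= surv_seq y l.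
Proof.
move=> y0; have [m m0] := foldl_step_delta l 1 y ler01 y0.
by rewrite /surv_seq !mul1r => ->; rewrite -mulrDr addrC subrK mulr1.
Qed.

Lemma foldl_step_surv_seq y l : 0 <= y ->
  foldl step (y, 1 - y) l = (surv_seq y l * delta y l, surv_seq y l * (1 - delta y l)).
Proof.
move=> y0; have [m _] := foldl_step_delta l 1 y ler01 y0.
by rewrite /surv_seq !mul1r => ->; rewrite -mulrDr subrKC mulr1.
Qed.

Lemma surv_seq_cat y w r : 0 <= y ->
  surv_seq y (w ++ r) = surv_seq y w * surv_seq (delta y w) r.
Proof.
move=> y0; rewrite {1}/surv_seq foldl_cat foldl_step_surv_seq // foldl_stepZ.
by rewrite /surv_seq; case: (foldl step (delta y w, _) r) => a b /=; rewrite mulrDr.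
Qed.
End Survival.

Arguments surv_seq {R}.

Section Concatenation.
Variable T : Type.
Implicit Types (w : seq (knock T)) (pi : nat -> knock T).

Lemma kcat_addn w pi n : kcat w pi (size w + n) = pi n.
Proof. by rewrite /kcat ltnNge leq_addr addKn. Qed.

Lemma mkseq_kcat_take w pi n : (n <= size w)%N -> mkseq (kcat w pi) n = take n w.
Proof.
move=> nw; rewrite -{2}(mkseq_nth Knock2 w) /mkseq -map_take take_iota (minn_idPl nw).
apply/eq_in_map => i.
by rewrite mem_iota /kcat => /andP[_ /leq_trans ->].
Qed.

Lemma mkseq_kcat_addn w pi n : mkseq (kcat w pi) (size w + n) = w ++ mkseq pi n.
Proof.
rewrite /mkseq iotaD map_cat -/(mkseq _ _) mkseq_kcat_take // take_size add0n.
congr cat; rewrite -[size w]addn0 iotaDl -map_comp.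
by apply: eq_map => i /=; rewrite kcat_addn.
Qed.

Lemma kinf_kcat w : (0 < size w)%N -> kinf w =1 kcat w (kinf w).
Proof.
move=> w_gt0 n; rewrite /kcat /kinf; case: ltnP => [nw | wn]; first by rewrite modn_small.
by rewrite -{1}(subnK wn) modnDr.
Qed.
End Concatenation.

Lemma knock_ok_nth (R : realType) (w : seq (knock R)) i :
  all (@knock_ok R) w -> knock_ok (nth Knock2 w i).
Proof.
move=> w_ok; have [iw | wi] := ltnP i (size w); first exact: (all_nthP Knock2 w_ok).
by rewrite nth_default.
Qed.

Lemma knock_ok_kcat (R : realType) (w : seq (knock R)) pi n :
  all (@knock_ok R) w -> (forall n, knock_ok (pi n)) -> knock_ok (kcat w pi n).
Proof.
by move=> w_ok pi_ok; rewrite /kcat; case: ifP => _; [exact: knock_ok_nth | exact: pi_ok].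
Qed.

Section Expectation.
Variables (R : realType) (p1 p2 c : R).
Hypothesis p2_ge0 : 0 <= p2.
Hypothesis p2_lt1 : p2 < 1.
Hypothesis c_ge0 : 0 <= c.
Implicit Types (x : R) (w : seq (knock R)) (pi : nat -> knock R).

Local Notation delta := (delta p1 p2).
Local Notation surv := (surv p1 p2).
Local Notation surv_seq := (@surv_seq R p1 p2).
Local Notation dur := (dur c).
Local Notation expect := (expect p1 p2 c).

Definition expect_term x pi n : R := dur (pi n) * surv x pi n.

Definition cost x w : R :=
  \sum_(0 <= i < size w) dur (nth Knock2 w i) * surv_seq x (take i w).

Lemma expectE x pi : expect x pi = (\sum_(i <oo) (expect_term x pi i)%:E)%E.
Proof. by []. Qed.

Lemma eq_expect_term x pi pi' : pi =1 pi' -> expect_term x pi =1 expect_term x pi'.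
Proof. by move=> e n; rewrite /expect_term !surv_mkseq e (eq_mkseq e). Qed.

Lemma expect_term_ge0 x pi n : 0 <= x -> knock_ok (pi n) -> 0 <= expect_term x pi n.
Proof.
move=> x0; rewrite /expect_term; case: (pi n) => [t|] /= ok; apply: mulr_ge0 => //.
all: exact: surv_seq_ge0.
Qed.

Lemma sum_expect_term_kcat_head x w pi :
  \sum_(0 <= i < size w) expect_term x (kcat w pi) i = cost x w.
Proof.
apply: eq_big_nat => i /andP[_ iw].
by rewrite /expect_term surv_mkseq mkseq_kcat_take 1?ltnW // /kcat iw.
Qed.

Lemma expect_term_kcat_addn x w pi n : 0 <= x ->
  expect_term x (kcat w pi) (size w + n) = surv_seq x w * expect_term (delta x w) pi n.
Proof.
move=> x0; rewrite /expect_term !surv_mkseq mkseq_kcat_addn surv_seq_cat //.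
by rewrite kcat_addn mulrCA.
Qed.

Lemma sum_expect_term_kcat x w pi n : 0 <= x ->
  \sum_(0 <= i < size w + n) expect_term x (kcat w pi) i =
  cost x w + surv_seq x w * \sum_(0 <= i < n) expect_term (delta x w) pi i.
Proof.
move=> x0; rewrite (@big_cat_nat _ _ _ (size w)) ?leq_addr //=.
rewrite sum_expect_term_kcat_head; congr (_ + _).
rewrite -{1}(add0n (size w)) big_addn addKn mulr_sumr.
by apply: eq_bigr => i _; rewrite addnC expect_term_kcat_addn.
Qed.

Lemma expect_kcat x w pi : 0 <= x -> all (@knock_ok R) w -> (forall n, knock_ok (pi n)) ->
  expect x (kcat w pi) = ((cost x w)%:E + (surv_seq x w)%:E * expect (delta x w) pi)%E.
Proof.
move=> x0 w_ok pi_ok.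
have kcat_ge0 n : (0 <= (expect_term x (kcat w pi) n)%:E)%E.
  by rewrite lee_fin expect_term_ge0 // knock_ok_kcat.
have pi_ge0 n : (0 <= (expect_term (delta x w) pi n)%:E)%E.
  by rewrite lee_fin expect_term_ge0 // delta_ge0.
rewrite !expectE (nneseries_split 0 (size w) (fun n _ => kcat_ge0 n)) add0n.
rewrite -nneseries_addn // -nneseriesZl //; congr (_ + _)%E.
  by rewrite sumEFin sum_expect_term_kcat_head.
apply/congr_lim/funext => n; apply: eq_bigr => i _.
by rewrite addnC expect_term_kcat_addn.
Qed.

Lemma expect_ge0 x pi : 0 <= x -> (forall n, knock_ok (pi n)) -> (0 <= expect x pi)%E.
Proof.
move=> x0 pi_ok; rewrite expectE nneseries_ge0 // => n _ _.
by rewrite lee_fin expect_term_ge0.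
Qed.

Lemma sum_expect_term_kinf_mulSn x w N : (0 < size w)%N -> 0 <= x -> delta x w = x ->
  \sum_(0 <= i < N.+1 * size w) expect_term x (kinf w) i =
  cost x w + surv_seq x w * \sum_(0 <= i < N * size w) expect_term x (kinf w) i.
Proof.
move=> w_gt0 x0 xw; have := sum_expect_term_kcat x w (kinf w) (N * size w) x0.
rewrite xw mulSn => <-; apply: eq_bigr => i _; exact/eq_expect_term/kinf_kcat.
Qed.
End Expectation.

Arguments expect_term {R}.
Arguments cost {R}.

Lemma nneseries_le_mul_bound (R : realType) (f : nat -> \bar R) (m : nat) (P : \bar R) :
  (0 < m)%N -> (forall i, 0 <= f i)%E -> (forall N, \sum_(0 <= i < N * m) f i <= P)%E ->
  (\sum_(i <oo) f i <= P)%E.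
Proof.
move=> m_gt0 f_ge0 bound; apply: lime_le; first exact: is_cvg_nneseries.
apply: nearW => n; apply: le_trans (bound n).
by apply: lee_sum_nneg_natr => //; rewrite leq_pmulr.
Qed.

Theorem mainTheorem13 (R : realType) (p1 p2 c x : R)
    (w : seq (knock R)) (pi : nat -> knock R) :
  0 < p1 < 1 -> 0 < p2 < 1 -> 0 < c -> 0 <= x <= 1 ->
  (0 < size w)%N -> all (@knock_ok R) w -> (forall n, knock_ok (pi n)) ->
  delta p1 p2 x w = x ->
  (expect p1 p2 c x (kcat w pi) <= expect p1 p2 c x pi)%E ->
  (expect p1 p2 c x (kinf w) <= expect p1 p2 c x (kcat w pi))%E.
Proof.
move=> _ /andP[p2_gt0 p2_lt1] c_gt0 /andP[x_ge0 _] w_gt0 w_ok pi_ok xw wpi_le_pi.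
have [p2_ge0 c_ge0] := (ltW p2_gt0, ltW c_gt0).
have wpiE : expect p1 p2 c x (kcat w pi) =
    ((cost p1 p2 c x w)%:E + (surv_seq p1 p2 x w)%:E * expect p1 p2 c x pi)%E.
  by rewrite expect_kcat // xw.
rewrite expectE; apply: (@nneseries_le_mul_bound R _ (size w)) => //.
  by move=> i; rewrite lee_fin expect_term_ge0 //; exact: knock_ok_nth.
elim=> [|N IH].
  by rewrite mul0n big_geq // expect_ge0 // => n; exact: knock_ok_kcat.
rewrite sumEFin sum_expect_term_kinf_mulSn // EFinD EFinM wpiE leeD2l // -sumEFin.
by rewrite lee_wpmul2l ?lee_fin ?surv_seq_ge0 //; exact: le_trans IH wpi_le_pi.
Qed.
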